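(* Let $\Pi_n=\{\pi_1,\ldots,\pi_n\}$ be a finite set of policies of a discrete mean-field game (setting in the context). Consider the protocol: for $t=1,\ldots,T$, a learner chooses $\nu_t\in\Delta(\Pi_n)$ based on the past reward functions $R_1,\ldots,R_{t-1}$, then observes the linear reward function $R_t(\nu)=\mathbb E_{\pi\sim\nu}[J(\pi,\mu(\nu_t))]$ on $\Delta(\Pi_n)$ and receives $R_t(\nu_t)$. Let $\rho=\frac1T\sum_{t=1}^T\delta_{\nu_t}$. (i) If the learner has external regret $\max_{\nu\in\Delta(\Pi_n)}\sum_{t=1}^TR_t(\nu)-\sum_{t=1}^TR_t(\nu_t)=O(\sqrt T)$, then $\rho$ is an $O(1/\sqrt T)$-mean-field coarse correlated equilibrium of the restricted game, i.e. $\max_{i}\mathbb E_{\nu\sim\rho}\big[J(\pi_i,\mu(\nu))-\mathbb E_{\pi\sim\nu}J(\pi,\mu(\nu))\big]=O(1/\sqrt T)$. (ii) If the learner has internal regret $\max_{i,j}\sum_{t=1}^T\nu_t(\pi_i)\big(J(\pi_j,\mu(\nu_t))-J(\pi_i,\mu(\nu_t))\big)=O(\sqrt T)$, then $\rho$ is an $O(1/\sqrt T)$-mean-field correlated equilibrium of the restricted game, i.e. $\max_{i,j}\mathbb E_{\nu\sim\rho}\big[\nu(\pi_i)\big(J(\pi_j,\mu(\nu))-J(\pi_i,\mu(\nu))\big)\big]=O(1/\sqrt T)$.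
   Context: A discrete mean-field game consists of a finite state set $\mathcal X$, a finite action set $\mathcal A$, a reward $r:\mathcal X\times\mathcal A\times\Delta(\mathcal X)\to\mathbb R$, transition probabilities $p(x'\mid x,a)$ not depending on the population distribution, and an initial distribution $\mu_0\in\Delta(\mathcal X)$. A policy is $\pi:\mathcal X\to\Delta(\mathcal A)$; $\mu^\pi$ is its state occupancy measure (either $\gamma$-discounted or finite-horizon with time in the state), and $J(\pi,\mu)=\sum_{x,a}\mu^\pi(x)\pi(x,a)r(x,a,\mu)$ is the expected payoff. For $\nu\in\Delta(\Pi_n)$, $\mu(\nu)=\sum_\pi\nu(\pi)\mu^\pi$. A correlation device is a distribution $\rho$ over $\Delta(\Pi_n)$ (here finitely supported). *)

From HB Require Import structures.
From mathcomp Require Import all_boot all_order all_algebra.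
Set Implicit Arguments. Unset Strict Implicit. Unset Printing Implicit Defensive.
Import Order.TTheory GRing.Theory Num.Theory.
Local Open Scope ring_scope.

Section MFG.
Variables (R : rcfType) (X A : finType).

Definition is_dist (T : finType) (d : {ffun T -> R}) : Prop :=
  (forall x, 0 <= d x) /\ \sum_x d x = 1.

(* A discrete mean-field game: reward r x a mu, transitions p x a x'
   (independent of the population distribution), initial distribution mu0. *)
Record mfg := MFG {
  mfg_r : X -> A -> {ffun X -> R} -> R;
  mfg_p : X -> A -> {ffun X -> R};
  mfg_mu0 : {ffun X -> R} }.

Definition valid_mfg (G : mfg) : Prop :=
  (forall x a, is_dist (mfg_p G x a)) /\ is_dist (mfg_mu0 G).

Definition policy := {ffun X -> {ffun A -> R}}.
Definition is_policy (pi : policy) : Prop := forall x, is_dist (pi x).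

Fixpoint state_dist (G : mfg) (pi : policy) (h : nat) : {ffun X -> R} :=
  match h with
  | 0 => mfg_mu0 G
  | h'.+1 => let d := state_dist G pi h' in
      [ffun y => \sum_x \sum_a d x * pi x a * mfg_p G x a y]
  end.

Definition occ (H : nat) (G : mfg) (pi : policy) : {ffun X -> R} :=
  [ffun x => H%:R^-1 * \sum_(h < H) state_dist G pi h x].

Definition J (H : nat) (G : mfg) (pi : policy) (mu : {ffun X -> R}) : R :=
  \sum_x \sum_a occ H G pi x * pi x a * mfg_r G x a mu.

(* mu(nu) = sum_pi nu(pi) mu^pi, for nu in Delta(Pi_n), Pi_n = {pis i} *)
Definition mu_of (H : nat) (G : mfg) (n : nat) (pis : 'I_n -> policy)
  (nu : {ffun 'I_n -> R}) : {ffun X -> R} :=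
  [ffun x => \sum_i nu i * occ H G (pis i) x].

Definition reward (H : nat) (G : mfg) (n : nat) (pis : 'I_n -> policy)
  (nut nu : {ffun 'I_n -> R}) : R :=
  \sum_i nu i * J H G (pis i) (mu_of H G pis nut).

End MFG.

From HB Require Import structures.
From mathcomp Require Import all_boot all_order all_algebra.
From mathcomp Require Import ring.
Import Order.TTheory GRing.Theory Num.Theory.
Local Open Scope ring_scope.

(* Both equilibrium gaps of rho are time averages of regrets. The internal-regret
   sum is literally T times the correlated-equilibrium gap of rho. For the
   coarse gap, deviating to the pure policy pi_i is the point mass at i in
   Delta(Pi_n), whose linear reward in round t is J(pi_i, mu(nu_t)), so the
   coarse gap is bounded by the external regret divided by T. *)

Lemma invr_mul_sqrt (R : rcfType) (x : R) : 0 < x ->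
  x^-1 * Num.sqrt x = (Num.sqrt x)^-1.
Proof.
move=> x_gt0; have sx_neq0 : Num.sqrt x != 0 by rewrite gt_eqF ?sqrtr_gt0.
rewrite -{1}(sqr_sqrtr (ltW x_gt0)) expr2.
by field.
Qed.

Lemma average_le_div_sqrt (R : rcfType) (x S C : R) : 0 < x ->
  S <= C * Num.sqrt x -> x^-1 * S <= C / Num.sqrt x.
Proof.
move=> x_gt0 le_S.
rewrite -invr_mul_sqrt // mulrCA.
by rewrite ler_pM2l ?invr_gt0.
Qed.

Definition dirac (R : nzSemiRingType) {I : finType} (i : I) : {ffun I -> R} :=
  [ffun k => (k == i)%:R].

Lemma sum_dirac_mul (R : nzSemiRingType) {I : finType} (i : I) (f : I -> R) :
  \sum_k dirac R i k * f k = f i.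
Proof.
rewrite (bigD1 i) //= big1 => [|k /negbTE k_neq_i].
  by rewrite ffunE eqxx mul1r addr0.
by rewrite ffunE k_neq_i mul0r.
Qed.

Lemma dirac_is_dist (R : rcfType) {I : finType} (i : I) : is_dist (dirac R i).
Proof.
split; first by move=> k; rewrite ffunE ler0n.
by under eq_bigr do rewrite -[dirac R i _]mulr1; rewrite sum_dirac_mul.
Qed.

Lemma reward_dirac (R : rcfType) (X A : finType) (G : mfg R X A) (H n : nat)
    (pis : 'I_n -> policy R X A) (nut : {ffun 'I_n -> R}) (i : 'I_n) :
  reward H G pis nut (dirac R i) = J H G (pis i) (mu_of H G pis nut).
Proof. exact: sum_dirac_mul. Qed.

(* nu T t : the distribution chosen at round t (t < T) when the horizon is T. *)
Theorem mainTheorem4 (R : rcfType) (X A : finType) (G : mfg R X A) (H : nat)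
  (n : nat) (pis : 'I_n -> policy R X A) (nu : nat -> nat -> {ffun 'I_n -> R}) :
  valid_mfg G -> (0 < H)%N -> (forall i, is_policy (pis i)) ->
  (forall T t, (t < T)%N -> is_dist (nu T t)) ->
  (* (i) external regret O(sqrt T) ==> O(1/sqrt T)-mean-field CCE *)
  ((exists C : R, exists T0 : nat, forall T : nat, (T0 <= T)%N -> (0 < T)%N ->
      forall nu' : {ffun 'I_n -> R}, is_dist nu' ->
        \sum_(t < T) reward H G pis (nu T t) nu'
        - \sum_(t < T) reward H G pis (nu T t) (nu T t)
        <= C * Num.sqrt (T%:R)) ->
   exists C : R, exists T0 : nat, forall T : nat, (T0 <= T)%N -> (0 < T)%N ->
     forall i : 'I_n,
       T%:R^-1 * \sum_(t < T)
         (J H G (pis i) (mu_of H G pis (nu T t))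
          - \sum_k nu T t k * J H G (pis k) (mu_of H G pis (nu T t)))
       <= C / Num.sqrt (T%:R))
  /\
  (* (ii) internal regret O(sqrt T) ==> O(1/sqrt T)-mean-field CE *)
  ((exists C : R, exists T0 : nat, forall T : nat, (T0 <= T)%N -> (0 < T)%N ->
      forall i j : 'I_n,
        \sum_(t < T) nu T t i * (J H G (pis j) (mu_of H G pis (nu T t))
                                - J H G (pis i) (mu_of H G pis (nu T t)))
        <= C * Num.sqrt (T%:R)) ->
   exists C : R, exists T0 : nat, forall T : nat, (T0 <= T)%N -> (0 < T)%N ->
     forall i j : 'I_n,
       T%:R^-1 * \sum_(t < T) nu T t i * (J H G (pis j) (mu_of H G pis (nu T t))
                                - J H G (pis i) (mu_of H G pis (nu T t)))
       <= C / Num.sqrt (T%:R)).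
Proof.
move=> _ _ _ _; split=> -[C [T0 regret_le]]; exists C, T0 => T le_T0T T_gt0.
- move=> i; apply: average_le_div_sqrt; first by rewrite ltr0n.
  apply: le_trans (regret_le T le_T0T T_gt0 _ (dirac_is_dist R i)).
  by rewrite sumrB lerD2r; under [X in _ <= X]eq_bigr do rewrite reward_dirac.
- move=> i j; apply: average_le_div_sqrt; first by rewrite ltr0n.
  exact: regret_le.
Qed.
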